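(* Let $q\in\mathbb{C}$ with $0<|q|<1$ and $l,m,n,u\in\mathbb{N}$. Then \[ \sum_{k=0}^{n}\frac{q^{k^2+uk} (q)_{l+m+n-k}} {(q)_k (q)_{l-k}(q)_{m-k}(q)_{n-k} (q)_{u+k}} =\sum_{k=-n}^{n}\frac{(-1)^k q^{(3k^2-k)/2} (q)_{l+m}(q)_{m+n}(q)_{l+n}(q)_u} {(q)_{l-k}(q)_{m-k}(q)_{n-k}(q)_{u-k}(q)_{l+k}(q)_{m+k}(q)_{n+k}(q)_{u+k}}, \] and \[ \sum_{k=0}^{n}\frac{q^{k^2+(u+1)k} (q)_{l+m+n-k+1}} {(q)_k (q)_{l-k}(q)_{m-k}(q)_{n-k}(q)_{u+k+1}} =\sum_{k=-n-1}^{n}\frac{(-1)^k q^{(3k^2+k)/2} (q)_{l+m+1}(q)_{m+n+1}(q)_{l+n+1}(q)_u} {(q)_{l-k}(q)_{m-k}(q)_{n-k}(q)_{u-k}(q)_{l+k+1}(q)_{m+k+1}(q)_{n+k+1}(q)_{u+k+1}}. \]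
   Context: $(q)_n=(q;q)_n=(1-q)(1-q^2)\cdots(1-q^n)$ for $n\ge0$ (with $(q)_0=1$), and $1/(q)_n=0$ for $n<0$. *)

From mathcomp Require Import all_boot all_order all_algebra.
From mathcomp Require Export complex.
From mathcomp Require Export reals.
Set Implicit Arguments. Unset Strict Implicit. Unset Printing Implicit Defensive.
Import Order.TTheory GRing.Theory Num.Theory.
Local Open Scope ring_scope.

Definition qpoch {R : comNzRingType} (q : R) (n : nat) : R :=
  \prod_(i < n) (1 - q ^+ i.+1).

(* 1/(q)_n for an integer n, with the convention 1/(q)_n = 0 for n < 0. *)
Definition qpinv {F : fieldType} (q : F) (n : int) : F :=
  match n with
  | Posz m => (qpoch q m)^-1
  | Negz _ => 0
  end.

From mathcomp Require Import all_boot all_order all_algebra.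
From mathcomp Require Import complex reals.
From mathcomp Require Import ring zify.
Import Order.TTheory GRing.Theory Num.Theory.
Local Open Scope ring_scope.
Set Implicit Arguments. Unset Strict Implicit. Unset Printing Implicit Defensive.

(* Let D := kern q e (e = 0 or 1) and w := tri_weight q.  Pascal's rule for q-binomial
   coefficients gives a two-term recurrence whose summation by parts shows
   sum_k w k * D j k = [j == 0].  The q-Chu-Vandermonde sum expands (q)_(u+j+e) D u k D j k
   as sum_(i <= u) c_i D i k with c_0 = q^(ju) / ((q)_u (q)_j), hence
   sum_k w k D u k D j k = q^(ju) / ((q)_u (q)_j (q)_(u+j+e)).  The q-Pfaff-Saalschutz sum,
   shifted by k, evaluates sum_j beta_j D j k for the left-hand summands beta_j as
   q^(k(k+e)) (q)_(l+m+e) (q)_(l+n+e) (q)_(m+n+e) D l k D m k D n k.  Expanding each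
   left-hand term by the previous evaluation and exchanging the sums gives both identities,
   since w k q^(k(k+e)) = (-1)^k q^((3k^2 + (2e-1)k)/2). *)

Section QPochhammer.
Variables (F : fieldType) (q : F).

Lemma qpochS n : qpoch q n.+1 = qpoch q n * (1 - q ^+ n.+1).
Proof. by rewrite /qpoch big_ord_recr. Qed.

Lemma qpinv0 : qpinv q 0 = 1.
Proof. by rewrite /= /qpoch big_ord0 invr1. Qed.

Lemma qpinv_lt0 (a : int) : a < 0 -> qpinv q a = 0.
Proof. by case: a. Qed.

Lemma qpinv_neq0_ge0 (a : int) : qpinv q a != 0 -> 0 <= a.
Proof. by apply: contraR; rewrite -ltNge => /qpinv_lt0 ->; rewrite eqxx. Qed.

Hypothesis q_nonroot : forall n, q ^+ n.+1 != 1.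

Lemma onem_qX_neq0 n : 1 - q ^+ n.+1 != 0.
Proof. by rewrite subr_eq0 eq_sym q_nonroot. Qed.

Lemma qpoch_neq0 n : qpoch q n != 0.
Proof.
elim: n => [|n IH]; first by rewrite /qpoch big_ord0 oner_neq0.
by rewrite qpochS mulf_neq0 // onem_qX_neq0.
Qed.

Lemma qpinvK (n : nat) : qpinv q n * qpoch q n = 1.
Proof. by rewrite mulVf // qpoch_neq0. Qed.

Lemma qpinv1 : qpinv q 1 = (1 - q)^-1.
Proof. by rewrite /= /qpoch big_ord1 expr1. Qed.

Lemma qpinvB1 (a : int) : qpinv q (a - 1) = (1 - q ^ a) * qpinv q a.
Proof.
case: a => [[|n]|m].
- by rewrite expr0z subrr mul0r.
- rewrite (_ : n.+1%:Z - 1 = n); last by lia.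
  by rewrite /= qpochS invfM mulrCA mulfV ?mulr1 // onem_qX_neq0.
- by rewrite qpinv_lt0 ?mulr0 //; lia.
Qed.

Lemma qpinvS (n : nat) : qpinv q n = (1 - q ^+ n.+1) * qpinv q n.+1.
Proof. by rewrite [n%:Z](_ : _ = n.+1%:Z - 1) ?qpinvB1 //; lia. Qed.

Hypothesis q_neq0 : q != 0.

Lemma qpinv_pascal (a b : int) :
  (1 - q ^ (a + b)) * qpinv q a * qpinv q b
  = qpinv q (a - 1) * qpinv q b + q ^ a * qpinv q a * qpinv q (b - 1).
Proof. by rewrite !qpinvB1 expfzDr //; ring. Qed.

End QPochhammer.

Lemma normr_lt1_nonroot (F : numFieldType) (q : F) n : `|q| < 1 -> q ^+ n.+1 != 1.
Proof.
move=> q_lt1; apply/eqP => qn1.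
have := exprn_ilt1 n.+1 (normr_ge0 q) q_lt1.
by rewrite -normrX qn1 normr1 ltxx.
Qed.

Section SumZ.
Variable V : zmodType.

Definition sumZ (N : nat) (f : int -> V) := \sum_(i < (2 * N).+1) f (i%:Z - N%:Z).

Lemma sumZ_shift1 N f :
  sumZ N (fun k => f (k + 1)) = sumZ N f - f (- N%:Z) + f (N%:Z + 1).
Proof.
rewrite /sumZ big_ord_recr big_ord_recl /= sub0r.
rewrite (_ : (2 * N)%:Z - N%:Z + 1 = N%:Z + 1); last by lia.
congr (_ + _); rewrite addrAC subrr add0r; apply: eq_bigr => i _.
by congr f; rewrite /bump /=; lia.
Qed.

Lemma sumZ_window N (a : int) K f :
  - N%:Z <= a -> a + K%:Z <= N%:Z + 1 ->
  (forall k, f k != 0 -> a <= k < a + K%:Z) ->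
  sumZ N f = \sum_(i < K) f (a + i%:Z).
Proof.
move=> aN aKN f_supp; set s := absz (a + N%:Z).
have s_def : s%:Z = a + N%:Z by rewrite /s; lia.
have f_out i : ~~ (s <= i < s + K)%N -> f (i%:Z - N%:Z) = 0.
  by move=> i_out; apply/eqP; apply: contraNT i_out => /f_supp; lia.
rewrite /sumZ -(big_mkord xpredT (fun i : nat => f (i%:Z - N%:Z))).
rewrite (@big_cat_nat _ _ _ s) /=; [|lia|lia].
rewrite (@big_cat_nat _ _ _ (s + K) s) /=; [|lia|lia].
rewrite big1_seq ?add0r; last first.
  by move=> i /andP[_]; rewrite mem_iota => /andP[_ i_lt]; apply: f_out; lia.
rewrite [X in _ + X]big1_seq ?addr0; last first.
  by move=> i /andP[_]; rewrite mem_iota => /andP[i_ge _]; apply: f_out; lia.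
rewrite -{1}[s]add0n big_addn addKn big_mkord; apply: eq_bigr => i _.
by congr f; rewrite PoszD s_def; lia.
Qed.

End SumZ.

Lemma sumr_ord_offset (V : zmodType) (K s : nat) (g : nat -> V) : (s <= K)%N ->
  (forall i, (i < s)%N -> g i = 0) -> \sum_(i < K) g i = \sum_(t < K - s) g (s + t)%N.
Proof.
move=> le_sK g_lt_s; rewrite -(big_mkord xpredT g) (@big_cat_nat _ _ _ s) //=.
rewrite big1_seq ?add0r => [|i /andP[_]]; last by rewrite mem_iota => ?; apply: g_lt_s; lia.
by rewrite -{1}[s]add0n big_addn big_mkord; apply: eq_bigr => i _; rewrite addnC.
Qed.

Section Kernel.
Variables (F : fieldType) (q : F) (e : nat).

Definition kern (x k : int) := qpinv q (x - k) * qpinv q (x + k + e%:Z).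

Lemma kern_sym x k : kern x k = kern x (- k - e%:Z).
Proof. by rewrite /kern mulrC; congr (qpinv q _ * qpinv q _); lia. Qed.

Lemma kern_lt x k : x < k -> kern x k = 0.
Proof. by move=> xk; rewrite /kern qpinv_lt0 ?mul0r //; lia. Qed.

Lemma kern_neq0 x k : kern x k != 0 -> - x - e%:Z <= k <= x.
Proof.
rewrite /kern mulf_eq0 negb_or => /andP[/qpinv_neq0_ge0 + /qpinv_neq0_ge0]; lia.
Qed.

End Kernel.

Section Orthogonality.
Variables (F : fieldType) (q : F).
Hypothesis q_neq0 : q != 0.
Hypothesis q_nonroot : forall n, q ^+ n.+1 != 1.

Definition tri_weight (k : int) : F := (-1) ^ k * q ^ (k * (k - 1) %/ 2)%Z.

Lemma tri_weightS k : tri_weight (k + 1) = - q ^ k * tri_weight k.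
Proof.
rewrite /tri_weight (_ : (k + 1) * (k + 1 - 1) = k * 2 + k * (k - 1)); last by ring.
by rewrite divzMDl // !expfzDr ?oppr_eq0 ?oner_eq0 // expr1z; ring.
Qed.

Lemma tri_weight0 : tri_weight 0 = 1.
Proof. by rewrite /tri_weight mul0r div0z !expr0z mulr1. Qed.

Lemma tri_weightN1 : tri_weight (-1) = - q.
Proof. by rewrite /tri_weight [(_ %/ 2)%Z]/(1 : int) expr1z exprN1 invrN1 mulN1r. Qed.

Let orth_term (a b k : int) := tri_weight k * qpinv q (a - k) * qpinv q (b + k).
Let orth_sum N a b := sumZ N (orth_term a b).

Lemma orth_term_rec a b k :
  (1 - q ^ (a + b)) * orth_term a b k
  = orth_term (a - 1) b k - q ^ (a - 1) * orth_term (a - 1) b (k - 1).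
Proof.
have := qpinv_pascal q_nonroot q_neq0 (a - k) (b + k).
rewrite /orth_term (_ : a - k + (b + k) = a + b); last by lia.
rewrite (_ : a - 1 - (k - 1) = a - k); last by lia.
rewrite (_ : a - 1 - k = a - k - 1); last by lia.
rewrite (_ : b + (k - 1) = b + k - 1); last by lia.
have -> : q ^ (a - 1) = q ^ (a - k) * q ^ (k - 1).
  by rewrite -expfzDr //; congr (q ^ _); lia.
move=> pascal.
have -> : tri_weight k = - q ^ (k - 1) * tri_weight (k - 1) by rewrite -tri_weightS subrK.
transitivity (- q ^ (k - 1) * tri_weight (k - 1)
  * ((1 - q ^ (a + b)) * qpinv q (a - k) * qpinv q (b + k))); first ring.
by rewrite pascal; ring.
Qed.

Lemma orth_sum_rec N a b : a <= N%:Z -> b <= N%:Z ->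
  (1 - q ^ (a + b)) * orth_sum N a b = (1 - q ^ (a - 1)) * orth_sum N (a - 1) b.
Proof.
move=> aN bN.
have shift : sumZ N (fun k => orth_term (a - 1) b (k - 1)) = orth_sum N (a - 1) b.
  have lo : orth_term (a - 1) b (- N%:Z - 1) = 0.
    by rewrite /orth_term [qpinv q (b + _)]qpinv_lt0 ?mulr0 //; lia.
  have hi : orth_term (a - 1) b (N%:Z + 1 - 1) = 0.
    by rewrite /orth_term [qpinv q (a - 1 - _)]qpinv_lt0 ?mulr0 ?mul0r //; lia.
  have /= := sumZ_shift1 N (fun k => orth_term (a - 1) b (k - 1)).
  rewrite lo hi subr0 addr0 => <-.
  by apply: eq_bigr => i _; rewrite addrK.
rewrite /orth_sum {1}/sumZ mulr_sumr.
under eq_bigr do rewrite orth_term_rec.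
rewrite sumrB -mulr_sumr -/(sumZ N (orth_term (a - 1) b)).
rewrite -/(sumZ N (fun k => orth_term (a - 1) b (k - 1))) shift.
by rewrite mulrBl mul1r.
Qed.

Lemma orth_sum_eq0 N (a b : nat) : (a + b < N)%N -> orth_sum N a.+1 b = 0.
Proof.
elim: a => [|a IH] abN.
- apply: (mulfI (onem_qX_neq0 q_nonroot b)); rewrite mulr0 exprnP.
  rewrite (_ : b.+1%:Z = 1%N%:Z + b); last by lia.
  by rewrite orth_sum_rec ?subrr ?expr0z ?subrr ?mul0r //; lia.
- apply: (mulfI (onem_qX_neq0 q_nonroot (a.+1 + b))); rewrite mulr0 exprnP.
  rewrite (_ : (a.+1 + b).+1%:Z = a.+2%:Z + b); last by lia.
  rewrite orth_sum_rec; [|lia|lia].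
  by rewrite (_ : a.+2%:Z - 1 = a.+1) ?IH ?mulr0 //; lia.
Qed.

Lemma orth_sum0 N (e : nat) : (e <= 1)%N -> (e < N)%N -> orth_sum N 0 e = 1.
Proof.
move=> e_le1 eN; rewrite /orth_sum (@sumZ_window _ N (- e%:Z) e.+1); [|lia|lia|]; last first.
  move=> k; rewrite /orth_term !mulf_eq0 !negb_or.
  by move=> /andP[/andP[_ /qpinv_neq0_ge0 ?] /qpinv_neq0_ge0 ?]; lia.
case: e e_le1 {eN} => [|[|//]] _.
- by rewrite big_ord1 /orth_term (_ : - 0%:Z + _ = 0) // tri_weight0 qpinv0 !mulr1.
- rewrite big_ord_recr big_ord1 /orth_term.
  transitivity (tri_weight (-1) * qpinv q 1 * qpinv q 0 + tri_weight 0 * qpinv q 0 * qpinv q 1).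
    by congr (_ * qpinv q _ * qpinv q _ + _ * qpinv q _ * qpinv q _).
  rewrite tri_weight0 tri_weightN1 qpinv0 qpinv1.
  have onem_q_neq0 : 1 - q != 0 by rewrite -[q]expr1 onem_qX_neq0.
  by field.
Qed.

Lemma sumZ_tri_weight_kern N (j e : nat) : (e <= 1)%N -> (2 * j + e < N)%N ->
  sumZ N (fun k => tri_weight k * kern q e j k) = (j == 0)%:R.
Proof.
move=> e_le1 jeN.
have -> : sumZ N (fun k => tri_weight k * kern q e j k) = orth_sum N j (j + e)%N.
  by apply: eq_bigr => i _; rewrite /orth_term /kern mulrA; congr (_ * qpinv q _); lia.
case: j jeN => [|j] jeN; first exact: orth_sum0.
by rewrite orth_sum_eq0 //; lia.
Qed.

End Orthogonality.

Section QChuVandermonde.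
Variables (F : fieldType) (q : F).
Hypothesis q_neq0 : q != 0.
Hypothesis q_nonroot : forall n, q ^+ n.+1 != 1.
Notation I := (qpinv q).

Let qcv_term (u : nat) (n c : int) (i : nat) :=
  q ^ ((n - i%:Z) * (u%:Z - i%:Z)) * I (u%:Z - i%:Z) * I (n - i%:Z) * I i * I (c + i%:Z).
Let qcv_sum (u : nat) (n c : int) := \sum_(i < u.+1) qcv_term u n c i.

Lemma qcv_sum_rec (u : nat) (n c : int) :
  (1 - q ^+ u.+1) * qcv_sum u.+1 n c = q ^ n * qcv_sum u n c + qcv_sum u (n - 1) (c + 1).
Proof.
pose w (i : nat) := q ^ ((n - i%:Z) * (u.+1%:Z - i%:Z))
  * I (u.+1%:Z - i%:Z) * I (n - i%:Z) * I (i%:Z - 1) * I (c + i%:Z).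
have term_rec i : (1 - q ^+ u.+1) * qcv_term u.+1 n c i = q ^ n * qcv_term u n c i + w i.
  have := qpinv_pascal q_nonroot q_neq0 i (u.+1%:Z - i%:Z).
  rewrite (_ : i%:Z + (u.+1%:Z - i%:Z) = u.+1); last by lia.
  rewrite (_ : u.+1%:Z - i%:Z - 1 = u%:Z - i%:Z); last by lia.
  rewrite -exprnP => pascal.
  have exp_split : q ^ n * q ^ ((n - i%:Z) * (u%:Z - i%:Z))
           = q ^ ((n - i%:Z) * (u.+1%:Z - i%:Z)) * q ^ i.
    by rewrite -!expfzDr //; congr (q ^ _); ring.
  rewrite /qcv_term /w !mulrA exp_split.
  transitivity (q ^ ((n - i%:Z) * (u.+1%:Z - i%:Z)) * I (n - i%:Z) * I (c + i%:Z)
    * ((1 - q ^+ u.+1) * I i * I (u.+1%:Z - i%:Z))); first ring.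
  by rewrite pascal; ring.
rewrite /qcv_sum mulr_sumr; under eq_bigr do rewrite term_rec.
rewrite big_split /= -mulr_sumr; congr (_ * _ + _).
- rewrite big_ord_recr /= [qcv_term u n c u.+1]/qcv_term [I (u%:Z - _)]qpinv_lt0; last by lia.
  by rewrite mulr0 !mul0r addr0.
- rewrite big_ord_recl [w 0]/w [I (0%:Z - 1)]qpinv_lt0 // mulr0 mul0r add0r.
  apply: eq_bigr => i _; rewrite /w /qcv_term lift0.
  by congr (q ^ _ * I _ * I _ * I _ * I _); lia.
Qed.

Lemma q_chu_vandermonde (u n c : nat) :
  \sum_(i < u.+1) q ^ ((n%:Z - i%:Z) * (u%:Z - i%:Z))
     * I (u%:Z - i%:Z) * I (n%:Z - i%:Z) * I i * I (c%:Z + i%:Z)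
  = I u * I (u + c)%N * I n * I (n + c)%N * qpoch q (u + n + c).
Proof.
change (qcv_sum u n c = I u * I (u + c)%N * I n * I (n + c)%N * qpoch q (u + n + c)).
elim: u n c => [|u IH] n c.
  rewrite /qcv_sum big_ord1 /qcv_term !subr0 mulr0 expr0z !add0n.
  by rewrite !qpinv0 -[RHS]mulrA qpinvK // mulr1; ring.
apply: (mulfI (onem_qX_neq0 q_nonroot u)); rewrite qcv_sum_rec.
have IS := qpinvS q_nonroot.
case: n => [|n].
  rewrite sub0r [qcv_sum u (-1) _]big1 => [|i _]; last first.
    by rewrite /qcv_term [I (-1 - _)]qpinv_lt0 ?mulr0 ?mul0r //; lia.
  rewrite addr0 expr0z mul1r IH !addn0 (IS u) (IS (u + c)) addSn qpochS; ring.
rewrite (_ : n.+1%:Z - 1 = n); last by lia.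
rewrite (_ : c%:Z + 1 = c.+1); last by lia.
rewrite !IH (IS u) (IS (u + c)) (IS n) !addnS !addSn !qpochS -exprnP.
have -> : q ^+ (u + n + c).+2 = q ^+ n.+1 * q ^+ (u + c).+1.
  by rewrite -exprD; congr (q ^+ _); lia.
ring.
Qed.

End QChuVandermonde.

Section QSaalschutz.
Variables (F : fieldType) (q : F).
Hypothesis q_neq0 : q != 0.
Hypothesis q_nonroot : forall n, q ^+ n.+1 != 1.
Notation I := (qpinv q).
Notation P := (qpoch q).
Variables l m c : nat.

Let saal_term (n i : nat) := q ^+ (i * i + c * i) * P (l + m + n + c - i) * I i
  * I (c%:Z + i%:Z) * I (l%:Z - i%:Z) * I (m%:Z - i%:Z) * I (n%:Z - i%:Z).

(* Wilf-Zeilberger certificate of saal_term: its i-differences telescope the recurrence in n. *)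
Let saal_cert (n i : nat) := - q ^+ n.+1 * q ^+ (i * (i + c - 1))
  * P (l + m + n + c + 1 - i) * I (i%:Z - 1) * I (c%:Z + i%:Z - 1)
  * I (l%:Z - i%:Z) * I (m%:Z - i%:Z) * I (n.+1%:Z - i%:Z).

Lemma saal_term_rec (n i : nat) : (i <= n)%N ->
  (1 - q ^+ n.+1) * (1 - q ^+ (n.+1 + c)) * saal_term n.+1 i
  - (1 - q ^+ (l + n.+1 + c)) * (1 - q ^+ (m + n.+1 + c)) * saal_term n i
  = saal_cert n i.+1 - saal_cert n i.
Proof.
move=> le_in; rewrite /saal_term /saal_cert.
set K := (l + m + n + c - i)%N.
rewrite (_ : (l + m + n.+1 + c - i = K.+1)%N); last by rewrite /K; lia.
rewrite (_ : (l + m + n + c + 1 - i = K.+1)%N); last by rewrite /K; lia.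
rewrite (_ : (l + m + n + c + 1 - i.+1 = K)%N); last by rewrite /K; lia.
rewrite (_ : i.+1%:Z - 1 = i); last by lia.
rewrite (_ : c%:Z + i.+1%:Z - 1 = c%:Z + i%:Z); last by lia.
rewrite (_ : l%:Z - i.+1%:Z = l%:Z - i%:Z - 1); last by lia.
rewrite (_ : m%:Z - i.+1%:Z = m%:Z - i%:Z - 1); last by lia.
rewrite (_ : n.+1%:Z - i.+1%:Z = n.+1%:Z - i%:Z - 1); last by lia.
rewrite (_ : n%:Z - i%:Z = n.+1%:Z - i%:Z - 1); last by lia.
have qXi_neq0 : q ^+ i != 0 by rewrite expf_neq0.
rewrite qpochS !(qpinvB1 q_nonroot) !expfzDr // -!exprnP -!exprnN.
set E := q ^+ (i * (i + c - 1)).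
rewrite (_ : q ^+ (i * i + c * i) = E * q ^+ i); last first.
  by rewrite -exprD; congr (_ ^+ _); nia.
rewrite (_ : q ^+ (i.+1 * (i.+1 + c - 1)) = E * q ^+ i * q ^+ i * q ^+ c); last first.
  by rewrite -!exprD; congr (_ ^+ _); nia.
rewrite (_ : q ^+ K.+1 = q ^+ l * q ^+ m * q ^+ n * q ^+ c * q / q ^+ i); last first.
  apply: (mulIf qXi_neq0); rewrite mulfVK // -!exprD -exprSr.
  by congr (_ ^+ _); rewrite /K; lia.
by rewrite !exprD !exprS; field.
Qed.

Lemma saal_term_rec_last (n : nat) :
  (1 - q ^+ n.+1) * (1 - q ^+ (n.+1 + c)) * saal_term n.+1 n.+1
  - (1 - q ^+ (l + n.+1 + c)) * (1 - q ^+ (m + n.+1 + c)) * saal_term n n.+1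
  = saal_cert n n.+2 - saal_cert n n.+1.
Proof.
rewrite /saal_term /saal_cert [I (n%:Z - _)]qpinv_lt0; last by lia.
rewrite subrr qpinv0 (_ : (l + m + n.+1 + c - n.+1 = l + m + n + c + 1 - n.+1)%N); last by lia.
rewrite (_ : n.+1%:Z - 1 = n); last by lia.
rewrite (_ : c%:Z + n.+1%:Z - 1 = (c + n)%N); last by lia.
rewrite (_ : c%:Z + n.+1%:Z = (c + n).+1); last by lia.
rewrite (_ : (n.+1 * n.+1 + c * n.+1 = n.+1 + n.+1 * (n.+1 + c - 1))%N); last by nia.
rewrite (qpinvS q_nonroot n) (qpinvS q_nonroot (c + n)) (_ : (n.+1 + c = (c + n).+1)%N); last by lia.
by rewrite exprD; ring.
Qed.

Lemma saal_sum_rec (n : nat) :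
  (1 - q ^+ n.+1) * (1 - q ^+ (n.+1 + c)) * \sum_(i < n.+2) saal_term n.+1 i
  = (1 - q ^+ (l + n.+1 + c)) * (1 - q ^+ (m + n.+1 + c)) * \sum_(i < n.+1) saal_term n i.
Proof.
have <- : \sum_(i < n.+2) saal_term n i = \sum_(i < n.+1) saal_term n i.
  rewrite big_ord_recr /= [saal_term n _]/saal_term [I (n%:Z - _)]qpinv_lt0; last by lia.
  by rewrite mulr0 addr0.
apply/eqP; rewrite -subr_eq0 !mulr_sumr -sumrB.
rewrite -(big_mkord xpredT (fun i => (1 - q ^+ n.+1) * (1 - q ^+ (n.+1 + c)) * saal_term n.+1 i
  - (1 - q ^+ (l + n.+1 + c)) * (1 - q ^+ (m + n.+1 + c)) * saal_term n i)).
rewrite (@telescope_sumr_eq _ _ _ (saal_cert n)) // => [|i /andP[_ lt_in2]].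
  rewrite /saal_cert [I (n.+1%:Z - n.+2%:Z)]qpinv_lt0; last by lia.
  by rewrite [I (0%:Z - 1)]qpinv_lt0 // !mulr0 !mul0r subrr.
case: (ltnP i n.+1) => [lt_in1 | ?]; first exact: saal_term_rec.
by rewrite (_ : i = n.+1); [exact: saal_term_rec_last | lia].
Qed.

Lemma q_saalschutz (n : nat) :
  \sum_(i < n.+1) q ^+ (i * i + c * i) * P (l + m + n + c - i) * I i
     * I (c%:Z + i%:Z) * I (l%:Z - i%:Z) * I (m%:Z - i%:Z) * I (n%:Z - i%:Z)
  = P (l + m + c) * P (l + n + c) * P (m + n + c)
    * I l * I m * I n * I (l + c)%N * I (m + c)%N * I (n + c)%N.
Proof.
change (\sum_(i < n.+1) saal_term n i = P (l + m + c) * P (l + n + c) * P (m + n + c)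
  * I l * I m * I n * I (l + c)%N * I (m + c)%N * I (n + c)%N).
have K := qpinvK q_nonroot.
elim: n => [|n IH].
  rewrite big_ord1 /saal_term (_ : (@ord0 0 : nat) = 0%N) //.
  rewrite !muln0 !addn0 !subn0 expr0 !subr0 !add0n !qpinv0.
  transitivity (P (l + m + c) * I c * I l * I m
    * ((I (l + c)%N * P (l + c)) * (I (m + c)%N * P (m + c)))); last ring.
  by rewrite !K; ring.
have coef_neq0 : (1 - q ^+ n.+1) * (1 - q ^+ (n.+1 + c)) != 0.
  by rewrite mulf_neq0 // ?addSn onem_qX_neq0.
apply: (mulfI coef_neq0); rewrite saal_sum_rec IH (qpinvS q_nonroot n) (qpinvS q_nonroot (n + c)).
by rewrite !addnS !addSn !qpochS; ring.
Qed.

End QSaalschutz.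

Section Bailey.
Variables (F : fieldType) (q : F).
Hypothesis q_neq0 : q != 0.
Hypothesis q_nonroot : forall n, q ^+ n.+1 != 1.
Notation I := (qpinv q).
Notation P := (qpoch q).
Variable e : nat.
Hypothesis e_le1 : (e <= 1)%N.
Notation D := (kern q e).

Lemma kern_reflect_ind (G : int -> Prop) :
  (forall kk : nat, G kk) -> (forall k, G (- k - e%:Z) -> G k) -> forall k, G k.
Proof.
move=> G_nat G_refl k; case: (lerP 0 k) => [k_ge0 | k_lt0].
  by rewrite -[k]gez0_abs.
by apply: G_refl; rewrite (_ : - k - e%:Z = absz (- k - e%:Z)); [exact: G_nat | lia].
Qed.

Lemma kern_vandermonde_nat (u n kk : nat) :
  \sum_(i < u.+1) q ^ ((n%:Z - i%:Z) * (u%:Z - i%:Z)) * I (u%:Z - i%:Z) * I (n%:Z - i%:Z) * D i kk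
  = D u kk * D n kk * P (u + n + e).
Proof.
case: (ltnP u kk) => [lt_u_kk | le_kk_u].
  rewrite [D u _]kern_lt ?mul0r; last by lia.
  by rewrite big1 // => i _; rewrite kern_lt ?mulr0 //; have := ltn_ord i; lia.
case: (ltnP n kk) => [lt_n_kk | le_kk_n].
  rewrite [D n _]kern_lt ?mulr0 ?mul0r; last by lia.
  rewrite big1 // => i _; case: (ltnP i kk) => [lt_i_kk | le_kk_i].
    by rewrite kern_lt ?mulr0 //; lia.
  by rewrite [I (n%:Z - _)]qpinv_lt0 ?mulr0 ?mul0r //; lia.
pose g (i : nat) := q ^ ((n%:Z - i%:Z) * (u%:Z - i%:Z))
  * I (u%:Z - i%:Z) * I (n%:Z - i%:Z) * D i kk.
rewrite (@sumr_ord_offset _ u.+1 kk g) => [||i lt_i_kk]; first last.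
- by rewrite /g kern_lt ?mulr0 //; lia.
- lia.
transitivity (\sum_(t < (u - kk).+1) q ^ (((n - kk)%N%:Z - t%:Z) * ((u - kk)%N%:Z - t%:Z))
  * I ((u - kk)%N%:Z - t%:Z) * I ((n - kk)%N%:Z - t%:Z) * I t * I ((kk + kk + e)%N%:Z + t%:Z)).
  rewrite subSn //; apply: eq_bigr => t _; rewrite /g /kern -!mulrA.
  by congr (q ^ _ * (I _ * (I _ * (I _ * I _)))); nia.
rewrite q_chu_vandermonde // (_ : (u - kk + (n - kk) + (kk + kk + e) = u + n + e)%N); last by lia.
by rewrite /kern !mulrA; congr (I _ * I _ * I _ * I _ * _); lia.
Qed.

Lemma kern_vandermonde (u n : nat) (k : int) :
  \sum_(i < u.+1) q ^ ((n%:Z - i%:Z) * (u%:Z - i%:Z)) * I (u%:Z - i%:Z) * I (n%:Z - i%:Z) * D i k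
  = D u k * D n k * P (u + n + e).
Proof.
elim/kern_reflect_ind: k => [kk | k IH]; first exact: kern_vandermonde_nat.
by under eq_bigr => i _ do rewrite (kern_sym q e i k); rewrite !(kern_sym q e _ k).
Qed.

Definition bailey_beta (l m n j : nat) := q ^+ (j * j + e * j) * P (l + m + n + e - j)
  * I (l%:Z - j%:Z) * I (m%:Z - j%:Z) * I (n%:Z - j%:Z).

Lemma bailey_beta_kern_shift (l m n kk t : nat) : (kk <= l)%N -> (kk <= m)%N -> (kk <= n)%N ->
  let c := (kk + kk + e)%N in
  bailey_beta l m n (kk + t) * D (kk + t)%N kk
  = q ^+ (kk * (kk + e)) * (q ^+ (t * t + c * t)
      * P ((l - kk) + (m - kk) + (n - kk) + c - t)%N * I t * I (c%:Z + t%:Z)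
      * I ((l - kk)%N%:Z - t%:Z) * I ((m - kk)%N%:Z - t%:Z) * I ((n - kk)%N%:Z - t%:Z)).
Proof.
move=> le_kk_l le_kk_m le_kk_n c; rewrite /bailey_beta /kern.
rewrite (_ : (kk + t) * (kk + t) + e * (kk + t) = kk * (kk + e) + (t * t + c * t))%N; last first.
  by rewrite /c; nia.
transitivity (q ^+ (kk * (kk + e)) * q ^+ (t * t + c * t)
  * P ((l - kk) + (m - kk) + (n - kk) + c - t)%N * I ((l - kk)%N%:Z - t%:Z)
  * I ((m - kk)%N%:Z - t%:Z) * I ((n - kk)%N%:Z - t%:Z) * (I t * I (c%:Z + t%:Z))); last ring.
by rewrite exprD; congr (_ * _ * P _ * I _ * I _ * I _ * (I _ * I _)); rewrite /c; lia.
Qed.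

Lemma kern_saalschutz_nat (l m n kk : nat) :
  \sum_(j < n.+1) bailey_beta l m n j * D j kk
  = q ^+ (kk * (kk + e)) * P (l + m + e) * P (l + n + e) * P (m + n + e)
    * D l kk * D m kk * D n kk.
Proof.
have [small | ] := boolP [|| (l < kk)%N, (m < kk)%N | (n < kk)%N].
  rewrite big1 => [|j _].
    by case/or3P: small => ?;
      [rewrite [D l _]kern_lt | rewrite [D m _]kern_lt | rewrite [D n _]kern_lt];
      rewrite ?mulr0 ?mul0r //; lia.
  case: (ltnP j kk) => [lt_j_kk | le_kk_j]; first by rewrite kern_lt ?mulr0 //; lia.
  rewrite /bailey_beta; case/or3P: small => ?.
  - by rewrite [I (l%:Z - _)]qpinv_lt0 ?mulr0 ?mul0r //; lia.
  - by rewrite [I (m%:Z - _)]qpinv_lt0 ?mulr0 ?mul0r //; lia.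
  - by have := ltn_ord j; lia.
rewrite !negb_or -!leqNgt => /and3P[le_kk_l le_kk_m le_kk_n].
pose g (j : nat) := bailey_beta l m n j * D j kk.
rewrite (@sumr_ord_offset _ n.+1 kk g) => [||j lt_j_kk]; first last.
- by rewrite /g kern_lt ?mulr0 //; lia.
- lia.
rewrite subSn //; under eq_bigr => t _ do rewrite /g bailey_beta_kern_shift //.
rewrite -mulr_sumr q_saalschutz // /kern; set c := (kk + kk + e)%N.
rewrite (_ : (l - kk + (m - kk) + c = l + m + e)%N); last by rewrite /c; lia.
rewrite (_ : (l - kk + (n - kk) + c = l + n + e)%N); last by rewrite /c; lia.
rewrite (_ : (m - kk + (n - kk) + c = m + n + e)%N); last by rewrite /c; lia.
transitivity (q ^+ (kk * (kk + e)) * P (l + m + e) * P (l + n + e) * P (m + n + e)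
  * I (l - kk)%N * I (l - kk + c)%N * I (m - kk)%N * I (m - kk + c)%N
  * I (n - kk)%N * I (n - kk + c)%N); first ring.
by rewrite !mulrA; congr (_ * _ * _ * _ * I _ * I _ * I _ * I _ * I _ * I _); rewrite /c; lia.
Qed.

Lemma kern_saalschutz (l m n : nat) (k : int) :
  \sum_(j < n.+1) bailey_beta l m n j * D j k
  = q ^ (k * (k + e%:Z)) * P (l + m + e) * P (l + n + e) * P (m + n + e)
    * D l k * D m k * D n k.
Proof.
elim/kern_reflect_ind: k => [kk | k IH].
  by rewrite kern_saalschutz_nat -PoszD -PoszM.
under eq_bigr => j _ do rewrite (kern_sym q e j k).
rewrite IH !(kern_sym q e _ k); congr (q ^ _ * _ * _ * _ * _ * _ * _); ring.
Qed.

Lemma kern_inversion N (u j : nat) : (2 * u + e < N)%N ->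
  P u * sumZ N (fun k => tri_weight q k * D u k * D j k) = q ^+ (j * u) * I j * I (u + j + e)%N.
Proof.
move=> uN.
pose c (i : nat) := q ^ ((j%:Z - i%:Z) * (u%:Z - i%:Z)) * I (u%:Z - i%:Z) * I (j%:Z - i%:Z).
have expand k : D u k * D j k = I (u + j + e)%N * \sum_(i < u.+1) c i * D i k.
  by rewrite kern_vandermonde [RHS]mulrCA qpinvK // mulr1.
have orth (i : 'I_u.+1) : sumZ N (fun k => tri_weight q k * D i k) = (i == 0%N :> nat)%:R.
  by apply: sumZ_tri_weight_kern => //; have := ltn_ord i; lia.
transitivity (P u * I (u + j + e)%N
  * \sum_(i < u.+1) c i * sumZ N (fun k => tri_weight q k * D i k)).
  rewrite -mulrA /sumZ; congr (_ * _).
  under eq_bigr => k _ do rewrite -mulrA expand mulrCA mulr_sumr.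
  rewrite -mulr_sumr exchange_big; congr (_ * _); apply: eq_bigr => i _.
  by rewrite mulr_sumr; apply: eq_bigr => k _; ring.
rewrite big_ord_recl big1 => [|i _]; last by rewrite orth mulr0.
rewrite orth addr0 mulr1 /c (_ : (@ord0 u : nat) = 0%N) // !subr0 -PoszM -exprnP.
by rewrite -[RHS]mulr1 -(qpinvK q_nonroot u); ring.
Qed.

Lemma bailey_transform N (l m n u : nat) : (2 * u + e < N)%N ->
  \sum_(j < n.+1) bailey_beta l m n j * (q ^+ (j * u) * I j * I (u + j + e)%N)
  = P u * P (l + m + e) * P (l + n + e) * P (m + n + e) * sumZ N (fun k =>
      tri_weight q k * q ^ (k * (k + e%:Z)) * D u k * D l k * D m k * D n k).
Proof.
move=> uN.
transitivity (\sum_(j < n.+1) \sum_(i < (2 * N).+1) P u * tri_weight q (i%:Z - N%:Z)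
  * D u (i%:Z - N%:Z) * (bailey_beta l m n j * D j (i%:Z - N%:Z))).
  apply: eq_bigr => j _; rewrite -(kern_inversion j uN) /sumZ !mulr_sumr.
  by apply: eq_bigr => i _; ring.
rewrite exchange_big /sumZ mulr_sumr; apply: eq_bigr => i _.
by rewrite -mulr_sumr kern_saalschutz; ring.
Qed.

End Bailey.

Section Identities.
Variables (F : fieldType) (q : F).
Hypothesis q_neq0 : q != 0.
Hypothesis q_nonroot : forall n, q ^+ n.+1 != 1.
Notation I := (qpinv q).

Lemma tri_weight_pentagonal (k : int) :
  tri_weight q k * q ^ (k * (k + 0%:Z)) = (-1) ^ k * q ^ ((3 * k ^+ 2 - k) %/ 2)%Z.
Proof.
rewrite /tri_weight -mulrA -expfzDr // (_ : 3 * k ^+ 2 - k = k * (k + 0%:Z) * 2 + k * (k - 1)).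
  by rewrite divzMDl // addrC.
by ring.
Qed.

Lemma tri_weight_pentagonal_shift (k : int) :
  tri_weight q k * q ^ (k * (k + 1%:Z)) = (-1) ^ k * q ^ ((3 * k ^+ 2 + k) %/ 2)%Z.
Proof.
rewrite /tri_weight -mulrA -expfzDr // (_ : 3 * k ^+ 2 + k = k * (k + 1%:Z) * 2 + k * (k - 1)).
  by rewrite divzMDl // addrC.
by ring.
Qed.

Variables l m n u : nat.

Lemma bailey_identity_a1 :
  \sum_(k < n.+1)
     q ^+ (k ^ 2 + u * k)%N * qpoch q (l + m + n - k)%N
       * qpinv q k%:Z * qpinv q (l%:Z - k%:Z) * qpinv q (m%:Z - k%:Z)
       * qpinv q (n%:Z - k%:Z) * qpinv q (u%:Z + k%:Z)
   =
   \sum_(j < (2 * n).+1)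
     (let k : int := j%:Z - n%:Z in
      (-1) ^ k * q ^ ((3 * k ^+ 2 - k) %/ 2)%Z
        * qpoch q (l + m) * qpoch q (m + n) * qpoch q (l + n) * qpoch q u
        * qpinv q (l%:Z - k) * qpinv q (m%:Z - k) * qpinv q (n%:Z - k)
        * qpinv q (u%:Z - k) * qpinv q (l%:Z + k) * qpinv q (m%:Z + k)
        * qpinv q (n%:Z + k) * qpinv q (u%:Z + k)).
Proof.
transitivity (\sum_(j < n.+1) bailey_beta q 0 l m n j * (q ^+ (j * u) * I j * I (u + j + 0)%N)).
  apply: eq_bigr => j _; rewrite /bailey_beta.
  rewrite (_ : (j ^ 2 + u * j = j * j + 0 * j + j * u)%N); last by ring.
  by rewrite exprD !addn0 (_ : u%:Z + j%:Z = (u + j)%N) //; ring.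
rewrite (@bailey_transform _ _ q_neq0 q_nonroot _ _ (n + (2 * u + 2))) //; last by lia.
rewrite (@sumZ_window _ _ (- n%:Z) (2 * n).+1); [|lia|lia|]; last first.
  move=> k nz; have /kern_neq0 : kern q 0 n k != 0 by apply: contraNneq nz => ->; rewrite mulr0.
  lia.
rewrite mulr_sumr; apply: eq_bigr => j _ /=; rewrite [- _ + _]addrC.
by rewrite -tri_weight_pentagonal /kern !addr0 !addn0; ring.
Qed.

Lemma bailey_identity_aq :
  \sum_(k < n.+1)
     q ^+ (k ^ 2 + u.+1 * k)%N * qpoch q (l + m + n - k).+1
       * qpinv q k%:Z * qpinv q (l%:Z - k%:Z) * qpinv q (m%:Z - k%:Z)
       * qpinv q (n%:Z - k%:Z) * qpinv q (u%:Z + k%:Z + 1)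
   =
   \sum_(j < (2 * n).+2)
     (let k : int := j%:Z - (n%:Z + 1) in
      (-1) ^ k * q ^ ((3 * k ^+ 2 + k) %/ 2)%Z
        * qpoch q (l + m).+1 * qpoch q (m + n).+1 * qpoch q (l + n).+1
        * qpoch q u
        * qpinv q (l%:Z - k) * qpinv q (m%:Z - k) * qpinv q (n%:Z - k)
        * qpinv q (u%:Z - k) * qpinv q (l%:Z + k + 1) * qpinv q (m%:Z + k + 1)
        * qpinv q (n%:Z + k + 1) * qpinv q (u%:Z + k + 1)).
Proof.
transitivity (\sum_(j < n.+1) bailey_beta q 1 l m n j * (q ^+ (j * u) * I j * I (u + j + 1)%N)).
  apply: eq_bigr => j _; rewrite /bailey_beta.
  rewrite (_ : (j ^ 2 + u.+1 * j = j * j + 1 * j + j * u)%N); last by ring.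
  rewrite (_ : (l + m + n + 1 - j = (l + m + n - j).+1)%N); last by have := ltn_ord j; lia.
  by rewrite exprD (_ : u%:Z + j%:Z + 1 = (u + j + 1)%N) //; ring.
rewrite (@bailey_transform _ _ q_neq0 q_nonroot _ _ (n.+1 + (2 * u + 2))) //; last by lia.
rewrite (@sumZ_window _ _ (- (n%:Z + 1)) (2 * n).+2); [|lia|lia|]; last first.
  move=> k nz; have /kern_neq0 : kern q 1 n k != 0 by apply: contraNneq nz => ->; rewrite mulr0.
  lia.
rewrite mulr_sumr; apply: eq_bigr => j _ /=; rewrite [- _ + _]addrC.
by rewrite -tri_weight_pentagonal_shift /kern !addn1; ring.
Qed.

End Identities.

Unset Implicit Arguments.
Theorem corollary5p5 (R : realType) (q : R[i]) (l m n u : nat)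
  (hq0 : 0 < `|q|) (hq1 : `|q| < 1) :
  (\sum_(k < n.+1)
     q ^+ (k ^ 2 + u * k)%N * qpoch q (l + m + n - k)%N
       * qpinv q k%:Z * qpinv q (l%:Z - k%:Z) * qpinv q (m%:Z - k%:Z)
       * qpinv q (n%:Z - k%:Z) * qpinv q (u%:Z + k%:Z)
   =
   \sum_(j < (2 * n).+1)
     (let k : int := j%:Z - n%:Z in
      (-1) ^ k * q ^ ((3 * k ^+ 2 - k) %/ 2)%Z
        * qpoch q (l + m) * qpoch q (m + n) * qpoch q (l + n) * qpoch q u
        * qpinv q (l%:Z - k) * qpinv q (m%:Z - k) * qpinv q (n%:Z - k)
        * qpinv q (u%:Z - k) * qpinv q (l%:Z + k) * qpinv q (m%:Z + k)
        * qpinv q (n%:Z + k) * qpinv q (u%:Z + k)))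
  /\
  (\sum_(k < n.+1)
     q ^+ (k ^ 2 + u.+1 * k)%N * qpoch q (l + m + n - k).+1
       * qpinv q k%:Z * qpinv q (l%:Z - k%:Z) * qpinv q (m%:Z - k%:Z)
       * qpinv q (n%:Z - k%:Z) * qpinv q (u%:Z + k%:Z + 1)
   =
   \sum_(j < (2 * n).+2)
     (let k : int := j%:Z - (n%:Z + 1) in
      (-1) ^ k * q ^ ((3 * k ^+ 2 + k) %/ 2)%Z
        * qpoch q (l + m).+1 * qpoch q (m + n).+1 * qpoch q (l + n).+1
        * qpoch q u
        * qpinv q (l%:Z - k) * qpinv q (m%:Z - k) * qpinv q (n%:Z - k)
        * qpinv q (u%:Z - k) * qpinv q (l%:Z + k + 1) * qpinv q (m%:Z + k + 1)
        * qpinv q (n%:Z + k + 1) * qpinv q (u%:Z + k + 1))).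
Proof.
have q_neq0 : q != 0 by rewrite -normr_gt0.
have q_nonroot i : q ^+ i.+1 != 1 by exact: normr_lt1_nonroot.
by split; [exact: bailey_identity_a1 | exact: bailey_identity_aq].
Qed.
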